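(* In the setting below, fix $k,d\in\mathbb N$, let $\omega$ be the smallest integer with $2\omega\ge\max\{\deg f,\deg g_1,\ldots,\deg g_m\}$, and assume $2\omega\le d_{\max}$. Let $((\boldsymbol\theta^{*\ell})_{\ell=1}^p,\mathbf y^* )$ be an optimal solution of the dual program defining $\tilde q^k_d$. If $\operatorname{rank}\mathbf M_\omega(\boldsymbol\theta^{*\ell})=1$ for every $\ell=1,\ldots,p$, then $\tilde q^k_d=f^*$ and $\mathbf x^*:=(y^*_{e_1},\ldots,y^*_{e_n})$ (where $e_i$ is the $i$-th unit multi-index) is an optimal solution of (P).
   Context: Problem (P): $f^*=\min\{f(\mathbf x):\mathbf x\in\mathbf K\}$ with $\mathbf K=\{\mathbf x\in\mathbb R^n:0\le g_j(\mathbf x)\le 1,\ j=1,\ldots,m\}$, $f,g_j\in\mathbb R[\mathbf x]$ ($f^*=+\infty$ if $\mathbf K=\emptyset$). $\mathbb R[\mathbf x;I]$ is the ring of polynomials in $\{x_i:i\in I\}$. Sparsity Assumption: there are $p\in\mathbb N$ and sets $I_\ell\subseteq\{1,\ldots,n\}$, $J_\ell\subseteq\{1,\ldots,m\}$ with $f=\sum_\ell f^\ell$ for some $f^\ell\in\mathbb R[\mathbf x;I_\ell]$, $g_j\in\mathbb R[\mathbf x;I_\ell]$ for $j\in J_\ell$, $\bigcup_\ell I_\ell=\{1,\ldots,n\}$, $\bigcup_\ell J_\ell=\{1,\ldots,m\}$, and for every $\ell\le p-1$ some $s\le\ell$ with $I_{\ell+1}\cap\bigcup_{r\le\ell}I_r\subseteq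 I_s$. $h_{\alpha\beta}=\prod_j g_j^{\alpha_j}(1-g_j)^{\beta_j}$; $N^\ell_d=\{(\alpha,\beta)\in\mathbb N_0^m\times\mathbb N_0^m:\mathrm{supp}(\alpha)\cup\mathrm{supp}(\beta)\subseteq J_\ell,\ \sum_j(\alpha_j+\beta_j)\le d\}$; $d_{\max}=\max\{\deg f,2k,d\max_j\deg g_j\}$. Let $\mathcal I_\ell=\{\gamma\in\mathbb N_0^n:|\gamma|\le d_{\max},\ \mathrm{supp}(\gamma)\subseteq I_\ell\}$, $\Gamma=\bigcup_\ell\mathcal I_\ell$. For a sequence $\boldsymbol\theta=(\theta_\gamma)$, $L_{\boldsymbol\theta}(\sum_\gamma q_\gamma\mathbf x^\gamma)=\sum_\gamma q_\gamma\theta_\gamma$, and for $t$ with $2t\le d_{\max}$, $\mathbf M_t(\boldsymbol\theta^\ell)$ is the matrix indexed by $\alpha,\beta\in\mathcal I_\ell$ with $|\alpha|,|\beta|\le t$, with entries $\theta^\ell_{\alpha+\beta}$. Dual program: $\tilde q^k_d=\inf\{L_{\mathbf y}(f):\mathbf y=(y_\gamma)_{\gamma\in\Gamma},\ \boldsymbol\theta^\ell=(\theta^\ell_\gamma)_{\gamma\in\mathcal I_\ell},\ y_\gamma=\theta^\ell_\gamma\ \forall\ell,\ \gamma\in\mathcal I_\ell,\ y_0=1,\ \mathbf M_k(\boldsymbol\theta^\ell)\succeq0,\ L_{\boldsymbol\theta^\ell}(h_{\alpha\beta})\ge0\ \forall(\alpha,\beta)\in N^\ell_d,\ \ell=1,\ldots,p\}$.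 *)

From HB Require Import structures.
From mathcomp Require Import all_boot all_order all_algebra.
Set Implicit Arguments. Unset Strict Implicit. Unset Printing Implicit Defensive.
Import Order.TTheory GRing.Theory Num.Theory.
Local Open Scope ring_scope.

Section Poly.
Variable (R : realFieldType) (n : nat).

Definition mono := {ffun 'I_n -> nat}.
Definition mzero : mono := [ffun => 0%N].
Definition madd (a b : mono) : mono := [ffun i => (a i + b i)%N].
Definition munit (i : 'I_n) : mono := [ffun j => nat_of_bool (j == i)].
Definition mdeg (a : mono) : nat := (\sum_(i < n) a i)%N.
Definition msupp_in (a : mono) (I : {set 'I_n}) : bool :=
  [forall i, (a i != 0%N) ==> (i \in I)].

(* a polynomial is a finite formal sum of terms  c * x^gamma  *)
Definition mpoly := seq (mono * R).

Definition pcoef (p : mpoly) (a : mono) : R :=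
  \sum_(t <- p | t.1 == a) t.2.
Definition pdeg (p : mpoly) : nat :=
  (\max_(t <- p | pcoef p t.1 != 0%R) mdeg t.1)%N.
Definition pvars_in (p : mpoly) (I : {set 'I_n}) : Prop :=
  forall a, pcoef p a != 0 -> msupp_in a I.

Definition pconst (c : R) : mpoly := [:: (mzero, c)].
Definition pmul (p q : mpoly) : mpoly :=
  [seq (madd t.1 s.1, t.2 * s.2) | t <- p, s <- q].
Definition pexp (p : mpoly) (k : nat) : mpoly := iter k (pmul p) (pconst 1).
Definition pone_sub (g : mpoly) : mpoly :=
  (mzero, 1) :: [seq (t.1, - t.2) | t <- g].

Definition meval (a : mono) (x : 'I_n -> R) : R := \prod_(i < n) x i ^+ a i.
Definition peval (p : mpoly) (x : 'I_n -> R) : R :=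
  \sum_(t <- p) t.2 * meval t.1 x.

Definition Lfun (th : mono -> R) (p : mpoly) : R := \sum_(t <- p) t.2 * th t.1.

(* moment matrix M_t(theta) indexed by gamma with supp(gamma) in I, |gamma| <= t *)
Definition mono_b (t : nat) := {ffun 'I_n -> 'I_t.+1}.
Definition to_mono t (a : mono_b t) : mono := [ffun i => nat_of_ord (a i)].
Definition adm (I : {set 'I_n}) (t : nat) : {set mono_b t} :=
  [set a | msupp_in (to_mono a) I && (mdeg (to_mono a) <= t)%N].
Definition momat (I : {set 'I_n}) (t : nat) (th : mono -> R)
  : 'M[R]_(#|adm I t|) :=
  \matrix_(i, j) th (madd (to_mono (enum_val i)) (to_mono (enum_val j))).

End Poly.

Definition psd (R : realFieldType) (N : nat) (M : 'M[R]_N) : Prop :=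
  forall v : 'rV[R]_N, 0 <= (v *m M *m v^T) 0 0.

Section Problem.
Variables (R : realFieldType) (n m p : nat).
Variables (f : mpoly R n) (g : 'I_m -> mpoly R n).
Variables (I : 'I_p -> {set 'I_n}) (J : 'I_p -> {set 'I_m}).

Definition inK (x : 'I_n -> R) : Prop :=
  forall j, 0 <= peval (g j) x <= 1.

Definition hab (a b : 'I_m -> nat) : mpoly R n :=
  foldr (fun j acc => pmul (pmul (pexp (g j) (a j)) (pexp (pone_sub (g j)) (b j))) acc)
        (pconst n 1) (enum 'I_m).

Definition inN (l : 'I_p) (d : nat) (a b : 'I_m -> nat) : Prop :=
  (forall j, (a j != 0%N) || (b j != 0%N) -> j \in J l) /\
  (\sum_(j < m) (a j + b j) <= d)%N.

Definition maxdeg_g : nat := (\max_(j < m) pdeg (g j))%N.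
Definition dmax (k d : nat) : nat := maxn (pdeg f) (maxn (2 * k) (d * maxdeg_g)).
Definition omega : nat := uphalf (maxn (pdeg f) maxdeg_g).

Definition sparsity (fl : 'I_p -> mpoly R n) : Prop :=
  (forall a, pcoef f a = \sum_(l < p) pcoef (fl l) a) /\
  (forall l, pvars_in (fl l) (I l)) /\
  (forall l j, j \in J l -> pvars_in (g j) (I l)) /\
  (\bigcup_(l < p) I l = setT) /\
  (\bigcup_(l < p) J l = setT) /\
  (forall l l1 : 'I_p, l1 = l.+1 :> nat ->
     exists s : 'I_p, (s <= l)%N /\
       (I l1 :&: \bigcup_(r < p | (r <= l)%N) I r) \subset I s).

(* feasibility for the dual program defining  q~^k_d ;
   y is indexed by Gamma, theta^l by I_l (values outside are irrelevant) *)
Definition dual_feasible (k d : nat) (th : 'I_p -> mono n -> R) (y : mono n -> R)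
  : Prop :=
  (forall l a, msupp_in a (I l) -> (mdeg a <= dmax k d)%N -> y a = th l a) /\
  y (mzero n) = 1 /\
  (forall l, psd (momat (I l) k (th l))) /\
  (forall l a b, inN l d a b -> 0 <= Lfun (th l) (hab a b)).

Definition dual_optimal (k d : nat) (th : 'I_p -> mono n -> R) (y : mono n -> R)
  : Prop :=
  dual_feasible k d th y /\
  (forall th' y', dual_feasible k d th' y' -> Lfun y f <= Lfun y' f).

End Problem.

From HB Require Import structures.
From mathcomp Require Import all_boot all_order all_algebra.
From mathcomp Require Import ring zify.
Import Order.TTheory GRing.Theory Num.Theory.
Local Open Scope ring_scope.
Set Implicit Arguments. Unset Strict Implicit. Unset Printing Implicit Defensive.

(* A rank-one moment matrix is the moment matrix of a point mass. Its 2x2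
   minors vanish, so each theta^l is multiplicative on monomials of degree at
   most omega supported on I_l; splitting a monomial into two halves then gives
   theta^l_gamma = x^gamma for |gamma| <= 2 omega, where x_i = y_{e_i} is read off
   the shared vector y.
   Hence L_y(f) = f(x), and the localizing constraints for h = g_j and
   h = 1 - g_j give 0 <= g_j(x) <= 1, i.e. x lies in K. As evaluation at any
   point of K is dual feasible, optimality of y yields f(x) <= f(x') on K. *)

Lemma rank1_minor (F : fieldType) m n (A : 'M[F]_(m, n)) : \rank A = 1%N ->
  forall i1 i2 j1 j2, A i1 j1 * A i2 j2 = A i1 j2 * A i2 j1.
Proof.
move=> rA i1 i2 j1 j2.
case: m A rA i1 i2 => [? _ [] //|m] A rA i1 i2.
case: n A rA j1 j2 => [? _ [] //|n] A rA j1 j2.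
have pid1 : pid_mx 1 = delta_mx 0 0 :> 'M[F]_(m.+1, n.+1).
  by apply/matrixP=> -[[|i] ?] [[|j] ?]; rewrite !mxE /= ?andbF.
have -> : A = col 0 (col_ebase A) *m row 0 (row_ebase A).
  by rewrite colE rowE mulmxA -(mulmxA _ (delta_mx 0 0)) mul_delta_mx -pid1 -rA mulmx_ebase.
by rewrite !mxE !big_ord1 !mxE; ring.
Qed.

Section Monomials.
Variable n : nat.
Implicit Types (a b c : mono n) (i : 'I_n) (I : {set 'I_n}).

Lemma madd0m a : madd (mzero n) a = a.
Proof. by apply/ffunP=> i; rewrite !ffunE. Qed.

Lemma maddm0 a : madd a (mzero n) = a.
Proof. by apply/ffunP=> i; rewrite !ffunE addn0. Qed.

Lemma mdegD a b : mdeg (madd a b) = (mdeg a + mdeg b)%N.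
Proof. by rewrite /mdeg -big_split; apply: eq_bigr=> i _; rewrite ffunE. Qed.

Lemma mdeg0 : mdeg (mzero n) = 0%N.
Proof. by rewrite /mdeg big1 // => i _; rewrite ffunE. Qed.

Lemma mdeg_munit i : mdeg (munit i) = 1%N.
Proof. by rewrite /mdeg (bigD1 i) //= big1 ?ffunE ?eqxx // => j /negbTE; rewrite ffunE => ->. Qed.

Lemma leq_mdeg a i : (a i <= mdeg a)%N.
Proof. by rewrite /mdeg (bigD1 i) //= leq_addr. Qed.

Lemma mdeg_eq0 a : mdeg a = 0%N -> a = mzero n.
Proof. by move=> a0; apply/ffunP=> i; rewrite ffunE; apply/eqP; rewrite -leqn0 -a0 leq_mdeg. Qed.

Lemma mdeg_gt0 a : (0 < mdeg a)%N -> exists i, (0 < a i)%N.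
Proof.
move=> a_gt0; apply/existsP; apply: contraTT a_gt0 => /existsPn a0.
by rewrite -leqNgt leqn0 /mdeg big1 // => i _; apply/eqP; rewrite -leqn0 leqNgt a0.
Qed.

Lemma mdeg_eq1 a : mdeg a = 1%N -> exists i, a = munit i.
Proof.
move=> a1; have [i ai] : exists i, (0 < a i)%N by apply: mdeg_gt0; rewrite a1.
move: a1; rewrite /mdeg (bigD1 i) //= => sum1.
have ai1 : a i = 1%N by lia.
move/eqP: sum1; rewrite ai1 add1n eqSS sum_nat_eq0 => /forallP rest.
exists i; apply/ffunP=> j; rewrite ffunE.
by case: (eqVneq j i) => [->|ji] //; apply/eqP; move: (rest j); rewrite ji.
Qed.

Lemma mdeg_split c s : (s <= mdeg c)%N -> exists a b, c = madd a b /\ mdeg a = s.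
Proof.
elim: s => [|s IH] hs; first by exists (mzero n), c; rewrite madd0m mdeg0.
have [a [b [cab das]]] := IH (ltnW hs).
have [i bi] : exists i, (0 < b i)%N.
  by apply: mdeg_gt0; move: hs; rewrite cab mdegD das; lia.
exists (madd a (munit i)), [ffun j => b j - munit i j]%N; split.
  apply/ffunP=> j; rewrite cab !ffunE -addnA subnKC //.
  by case: (eqVneq j i) => [->|]; rewrite /= ?eqxx.
by rewrite mdegD mdeg_munit das addn1.
Qed.

Lemma msupp_in_madd a b I :
  msupp_in (madd a b) I = msupp_in a I && msupp_in b I.
Proof.
apply/forallP/andP => [h|[/forallP ha /forallP hb] i].
  by split; apply/forallP=> i; apply/implyP=> abi; apply: (implyP (h i));
    rewrite ffunE addn_eq0 negb_and abi ?orbT.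
rewrite ffunE addn_eq0 negb_and; apply/implyP=> /orP[]; [exact: (implyP (ha i)) | exact: (implyP (hb i))].
Qed.

Lemma msupp_in0 I : msupp_in (mzero n) I.
Proof. by apply/forallP=> i; rewrite ffunE. Qed.

Lemma msupp_in_munit I i : i \in I -> msupp_in (munit i) I.
Proof. by move=> iI; apply/forallP=> j; rewrite ffunE; case: (eqVneq j i) => [->|]. Qed.

Variable R : realFieldType.
Implicit Type x : 'I_n -> R.

Lemma mevalD a b x : meval (madd a b) x = meval a x * meval b x.
Proof. by rewrite /meval -big_split; apply: eq_bigr=> i _; rewrite ffunE exprD. Qed.

Lemma meval0 x : meval (mzero n) x = 1.
Proof. by rewrite /meval big1 // => i _; rewrite ffunE expr0. Qed.

Lemma meval_munit i x : meval (munit i) x = x i.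
Proof.
rewrite /meval (bigD1 i) //= big1 ?mulr1 => [|j /negbTE ji]; first by rewrite ffunE eqxx expr1.
by rewrite ffunE ji expr0.
Qed.

End Monomials.

Section Polynomials.
Variables (R : realFieldType) (n : nat).
Implicit Types (a : mono n) (p q : mpoly R n) (th : mono n -> R) (x : 'I_n -> R).

Lemma Lfun_pcoef th p :
  Lfun th p = \sum_(a <- undup (map fst p)) pcoef p a * th a.
Proof.
rewrite /pcoef; under eq_bigr do rewrite mulr_suml big_mkcond /=.
rewrite exchange_big /Lfun; apply: eq_big_seq => t tp; rewrite -big_mkcond -big_filter /=.
rewrite (@eq_filter _ _ (pred1 t.1)) => [|a]; last exact: eq_sym.
by rewrite filter_pred1_uniq ?undup_uniq ?mem_undup ?map_f // big_seq1.
Qed.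

Lemma eq_Lfun th th' p : (forall a, pcoef p a != 0 -> th a = th' a) ->
  Lfun th p = Lfun th' p.
Proof.
move=> eq_th; rewrite !Lfun_pcoef; apply: eq_bigr => a _.
by case: (eqVneq (pcoef p a) 0) => [->|/eq_th ->]; rewrite ?mul0r.
Qed.

Lemma mdeg_le_pdeg p a : pcoef p a != 0 -> (mdeg a <= pdeg p)%N.
Proof.
move=> pa; have /hasP[t tp /eqP ta] : has (fun t => t.1 == a) p.
  by apply: contraR pa => pa0; rewrite /pcoef big_hasC ?eqxx.
by rewrite /pdeg -ta (leq_bigmax_seq (F := fun t => mdeg t.1) t tp) //= ta.
Qed.

Lemma pevalE p x : peval p x = Lfun (fun a => meval a x) p.
Proof. by []. Qed.

Lemma Lfun_pone_sub th q : Lfun th (pone_sub q) = th (mzero n) - Lfun th q.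
Proof.
rewrite /Lfun big_cons big_map mul1r -sumrN.
by congr (_ + _); apply: eq_bigr => t _; rewrite mulNr.
Qed.

Lemma pmul1p q : pmul (pconst n 1) q = q.
Proof.
rewrite /pmul /= cats0 -[RHS]map_id; apply: eq_map => t.
by rewrite madd0m mul1r; case: t.
Qed.

Lemma pmulp1 q : pmul q (pconst n 1) = q.
Proof. by rewrite /pmul; elim: q => //= t q ->; rewrite maddm0 mulr1; case: t. Qed.

Lemma peval_mul p q x : peval (pmul p q) x = peval p x * peval q x.
Proof.
rewrite /peval /pmul big_allpairs_dep /= mulr_suml; apply: eq_bigr => t _.
by rewrite mulr_sumr; apply: eq_bigr => s _; rewrite /= mevalD mulrACA.
Qed.

Lemma peval_const c x : peval (pconst n c) x = c.
Proof. by rewrite /peval big_seq1 meval0 mulr1. Qed.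

Lemma peval_exp q e x : peval (pexp q e) x = peval q x ^+ e.
Proof.
elim: e => [|e IH]; first by rewrite peval_const.
by rewrite /pexp iterS -/(pexp q e) peval_mul IH exprS.
Qed.

Lemma peval_pone_sub q x : peval (pone_sub q) x = 1 - peval q x.
Proof. by rewrite !pevalE Lfun_pone_sub meval0. Qed.

End Polynomials.

Definition mdelta m (j : 'I_m) : 'I_m -> nat := fun j' => nat_of_bool (j' == j).

Section Products.
Variables (R : realFieldType) (n m : nat) (g : 'I_m -> mpoly R n).
Implicit Types (a b : 'I_m -> nat) (j : 'I_m).

Lemma hab_ge0 a b x : inK g x -> 0 <= peval (hab g a b) x.
Proof.
move=> xK; rewrite /hab; elim: (enum 'I_m) => /= [|j s IH]; first by rewrite peval_const.
have /andP[g_ge0 g_le1] := xK j.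
by rewrite !peval_mul !peval_exp peval_pone_sub !mulr_ge0 ?exprn_ge0 ?subr_ge0.
Qed.

Lemma hab_supp1 j a b : (forall j', j' != j -> a j' = 0%N /\ b j' = 0%N) ->
  hab g a b = pmul (pmul (pexp (g j) (a j)) (pexp (pone_sub (g j)) (b j))) (pconst n 1).
Proof.
move=> ab0; set hj := pmul _ (pconst n 1).
suff fold_eq s : uniq s -> foldr (fun j' acc =>
    pmul (pmul (pexp (g j') (a j')) (pexp (pone_sub (g j')) (b j'))) acc) (pconst n 1) s
    = if j \in s then hj else pconst n 1.
  by rewrite /hab fold_eq ?enum_uniq ?mem_enum.
elim: s => //= j' s IH /andP[j's us]; rewrite IH // inE.
case: (eqVneq j j') j's => [<-|jj' _]; first by move=> /negbTE->.
have [-> ->] : a j' = 0%N /\ b j' = 0%N by apply: ab0; rewrite eq_sym.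
by rewrite /= !pmul1p.
Qed.

Lemma hab_mdelta_l j : hab g (mdelta j) (fun=> 0%N) = g j.
Proof.
rewrite (hab_supp1 (j := j)) /mdelta ?eqxx /pexp /= ?pmulp1 // => j' /negbTE-> //.
Qed.

Lemma hab_mdelta_r j : hab g (fun=> 0%N) (mdelta j) = pone_sub (g j).
Proof.
rewrite (hab_supp1 (j := j)) /mdelta ?eqxx /pexp /= ?pmul1p ?pmulp1 // => j' /negbTE-> //.
Qed.

Lemma inN_mdelta p (J : 'I_p -> {set 'I_m}) l d j : (1 <= d)%N -> j \in J l ->
  inN J l d (mdelta j) (fun=> 0%N) /\ inN J l d (fun=> 0%N) (mdelta j).
Proof.
move=> d_ge1 jJ; have sum1 : (\sum_(j' < m) mdelta j j' = 1)%N.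
  by rewrite (bigD1 j) //= /mdelta eqxx big1 // => j' /negbTE->.
split; split; rewrite ?big_split ?sum1 ?big1 ?addn0 ?add0n //.
  by move=> j'; rewrite /mdelta; case: (eqVneq j' j) => [->|].
by move=> j'; rewrite /mdelta; case: (eqVneq j' j) => [->|].
Qed.

End Products.

Section MomentMatrix.
Variables (R : realFieldType) (n : nat) (I : {set 'I_n}).
Implicit Types (a b c : mono n) (th : mono n -> R) (x : 'I_n -> R).

Lemma momat_index t a : msupp_in a I -> (mdeg a <= t)%N ->
  exists k : 'I_#|adm I t|, to_mono (enum_val k) = a.
Proof.
move=> aI a_le_t; pose ab : mono_b n t := [ffun i => inord (a i)].
have abE : to_mono ab = a.
  by apply/ffunP=> i; rewrite !ffunE inordK // ltnS (leq_trans (leq_mdeg a i)).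
have ab_adm : ab \in adm I t by rewrite inE abE aI a_le_t.
by exists (enum_rank_in ab_adm ab); rewrite enum_rankK_in.
Qed.

Lemma psd_momat_meval t x : psd (momat I t (fun a => meval a x)).
Proof.
move=> v; set w := \row_k meval (to_mono (enum_val k)) x : 'rV[R]_#|adm I t|.
have -> : momat I t (fun a => meval a x) = w^T *m w.
  by apply/matrixP=> i j; rewrite !mxE big_ord1 !mxE mevalD.
rewrite mulmxA -(mulmxA (v *m w^T)) -[w *m v^T]trmxK trmx_mul trmxK.
by rewrite mxE big_ord1 [(v *m w^T)^T _ _]mxE -expr2 sqr_ge0.
Qed.

Section RankOne.
Variables (w : nat) (th : mono n -> R).
Hypotheses (th_rank1 : \rank (momat I w th) = 1%N) (th0 : th (mzero n) = 1).

(* The 2x2 minor of M_w(th) on the rows a, 0 and the columns b, 0 vanishes. *)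
Lemma momat_rank1_mul a b : msupp_in a I -> (mdeg a <= w)%N ->
  msupp_in b I -> (mdeg b <= w)%N -> th (madd a b) = th a * th b.
Proof.
move=> aI aw bI bw.
have [ka <-] := momat_index aI aw; have [kb <-] := momat_index bI bw.
have [k0 k0E] : exists k0 : 'I_#|adm I w|, to_mono (enum_val k0) = mzero n.
  by apply: momat_index; rewrite ?msupp_in0 ?mdeg0.
have := rank1_minor th_rank1 ka k0 kb k0.
by rewrite !mxE k0E madd0m maddm0 th0 mulr1 => ->; rewrite madd0m.
Qed.

Lemma momat_rank1_meval x : {in I, forall i, th (munit i) = x i} ->
  forall c, msupp_in c I -> (mdeg c <= 2 * w)%N -> th c = meval c x.
Proof.
move=> th_unit c; have [s] := ubnP (mdeg c); elim: s c => // s IH c c_lt cI c_le.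
case: (ltngtP (mdeg c) 1) => [c_lt1|c_gt1|c_eq1].
- by rewrite (mdeg_eq0 (_ : mdeg c = 0%N)) ?th0 ?meval0 //; lia.
- have [a [b [cE da]]] := mdeg_split (leq_div (mdeg c) 2).
  move: cI c_lt c_le c_gt1 da; rewrite cE msupp_in_madd mdegD => /andP[aI bI] *.
  rewrite momat_rank1_mul ?mevalD ?IH //; lia.
- have [i ci] := mdeg_eq1 c_eq1; rewrite ci meval_munit th_unit //.
  by move/forallP: cI => /(_ i); rewrite ci ffunE eqxx.
Qed.

End RankOne.
End MomentMatrix.

Section Dual.
Variables (R : realFieldType) (n m p : nat).
Variables (f : mpoly R n) (g : 'I_m -> mpoly R n).
Variables (I : 'I_p -> {set 'I_n}) (J : 'I_p -> {set 'I_m}) (k d : nat).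
Implicit Types (th : 'I_p -> mono n -> R) (y : mono n -> R).

Lemma leq_maxdeg_omega : (maxn (pdeg f) (maxdeg_g g) <= 2 * omega f g)%N.
Proof. by rewrite /omega mul2n uphalfK leq_addl. Qed.

Lemma leq_pdeg_omega : (pdeg f <= 2 * omega f g)%N.
Proof. exact: leq_trans (leq_maxl _ _) leq_maxdeg_omega. Qed.

Lemma leq_pdeg_g_omega j : (pdeg (g j) <= 2 * omega f g)%N.
Proof.
apply: leq_trans (leq_trans (leq_maxr _ _) leq_maxdeg_omega).
exact: (leq_bigmax (F := fun j => pdeg (g j))).
Qed.

Lemma dual_feasible_th0 th y : dual_feasible f g I J k d th y ->
  forall l, th l (mzero n) = 1.
Proof. by case=> y_th [y0 _] l; rewrite -(y_th l) ?msupp_in0 ?mdeg0. Qed.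

Lemma dual_feasible_Lfun_g th y l j : dual_feasible f g I J k d th y ->
  (1 <= d)%N -> j \in J l -> 0 <= Lfun (th l) (g j) <= 1.
Proof.
move=> feas d_ge1 jJ; have [inN_g inN_1g] := inN_mdelta d_ge1 jJ.
have [_ [_ [_ hab_ge0]]] := feas.
have := hab_ge0 l _ _ inN_g; have := hab_ge0 l _ _ inN_1g.
by rewrite hab_mdelta_l hab_mdelta_r Lfun_pone_sub (dual_feasible_th0 feas) subr_ge0 => -> ->.
Qed.

Lemma dual_feasible_meval x : inK g x ->
  dual_feasible f g I J k d (fun _ a => meval a x) (fun a => meval a x).
Proof.
move=> xK; split=> //; split; first exact: meval0.
by split=> [l|l a b _]; [exact: psd_momat_meval | rewrite -pevalE hab_ge0].
Qed.

End Dual.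

Unset Implicit Arguments.
Set Strict Implicit.

Theorem mainTheorem5 (R : realFieldType) (n m p : nat)
  (f : mpoly R n) (g : 'I_m -> mpoly R n)
  (I : 'I_p -> {set 'I_n}) (J : 'I_p -> {set 'I_m})
  (fl : 'I_p -> mpoly R n)
  (Hsp : sparsity f g I J fl)
  (k d : nat) (Hk : (1 <= k)%N) (Hd : (1 <= d)%N)
  (Hom : (2 * omega f g <= dmax f g k d)%N)
  (th : 'I_p -> mono n -> R) (y : mono n -> R)
  (Hopt : dual_optimal f g I J k d th y)
  (Hrank : forall l : 'I_p, \rank (momat (I l) (omega f g) (th l)) = 1%N) :
  let xs : 'I_n -> R := fun i => y (munit i) in
  [/\ inK g xs,
      (forall x, inK g x -> peval f xs <= peval f x)
    & Lfun y f = peval f xs].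
Proof.
move=> xs; have [feas y_min] := Hopt; have [y_th _] := feas.
have [f_sum [fl_vars [g_vars [_ [J_cover _]]]]] := Hsp.
have th_meval l : forall c, msupp_in c (I l) -> (mdeg c <= 2 * omega f g)%N ->
    th l c = meval c xs.
  apply: (momat_rank1_meval (Hrank l) (dual_feasible_th0 feas l)) => i iI.
  by rewrite /xs (y_th l) ?msupp_in_munit ?mdeg_munit // /dmax; lia.
have xsK : inK g xs.
  move=> j; have /bigcupP[l _ jJ] : j \in \bigcup_(l < p) J l by rewrite J_cover inE.
  rewrite pevalE -(@eq_Lfun _ _ (th l)) => [|c gc]; first exact: dual_feasible_Lfun_g feas Hd jJ.
  by rewrite th_meval ?(g_vars _ _ jJ) // (leq_trans (mdeg_le_pdeg gc)) ?leq_pdeg_g_omega.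
have yf : Lfun y f = peval f xs.
  rewrite pevalE; apply: eq_Lfun => c fc.
  have [l flc] : exists l, pcoef (fl l) c != 0.
    apply/existsP; apply: contraR fc => /existsPn fl0.
    by rewrite f_sum big1 // => l _; apply/eqP/negbNE/fl0.
  have c_le := leq_trans (mdeg_le_pdeg fc) (leq_pdeg_omega f g).
  by rewrite (y_th l) ?th_meval ?(fl_vars l c flc) ?(leq_trans c_le Hom).
split=> // x xK; rewrite -yf; exact: y_min (dual_feasible_meval f I J k d xK).
Qed.
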